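(* Let $n\ge 2$, $p\ge 1$, $N\ge 1$, and let $\mathbf{x}=\{x_1,\dots,x_n\}$ be a sample of $p$-variate functions observed at $N$ time points $t_1,\dots,t_N$, i.e. real numbers $x_i^j(t_k)$ for $i=1,\dots,n$, $j=1,\dots,p$, $k=1,\dots,N$. Let $U=\mathbf{MEI}_d(\mathbf{x})$ and $V=\mathbf{MBD}_d(\mathbf{x})$ (the $n\times p$ matrices defined in the context), with rows $u_1,\dots,u_n$ and $v_1,\dots,v_n$ regarded as vectors in $\mathbb{R}^p$. Define $g_n:[0,1]\to\mathbb{R}$ by $$g_n(z)=\frac{2}{n}+z-\frac{n}{2(n-1)}\,z^2 .$$ (a) Suppose that for every $j\in\{1,\dots,p\}$, every $i\neq h$ in $\{1,\dots,n\}$ and every $k_1,k_2\in\{1,\dots,N\}$, $$\big(x_i^j(t_{k_1})-x_h^j(t_{k_1})\big)\big(x_i^j(t_{k_2})-x_h^j(t_{k_2})\big)>0 .$$ Then for every $i=1,\dots,n$, $$MBD_{\{u_1,\dots,u_n\}}(u_i)\;\le\; g_n\!\left(1-MEI_{\{v_1,\dots,v_n\}}(v_i)\right).$$ (b) If, in addition to the hypothesis of (a), for every $k\in\{1,\dots,N\}$, every $i\neq h$ and every $j\neq \ell$ in $\{1,\dots,p\}$, $$\big(x_i^j(t_{k})-x_h^j(t_{k})\big)\big(x_i^\ell(t_{k})-x_h^\ell(t_{k})\big)>0,$$ then for every $i=1,\dots,n$, $$MBD_{\{u_1,\dots,u_n\}}(u_i)\;=\; g_n\!\left(1-MEI_{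\{v_1,\dots,v_n\}}(v_i)\right).$$
   Context: Discrete modified band depth and modified epigraph index: for vectors $y_1,\dots,y_n\in\mathbb{R}^m$ (viewed as functions on the index set $\{1,\dots,m\}$) and $y\in\{y_1,\dots,y_n\}$, $$MBD_{\{y_1,\dots,y_n\}}(y)=\binom{n}{2}^{-1}\sum_{1\le a<b\le n}\frac{1}{m}\,\#\big\{k\in\{1,\dots,m\}:\ \min(y_a(k),y_b(k))\le y(k)\le \max(y_a(k),y_b(k))\big\},$$ $$MEI_{\{y_1,\dots,y_n\}}(y)=\frac{1}{n}\sum_{a=1}^{n}\frac{1}{m}\,\#\big\{k\in\{1,\dots,m\}:\ y_a(k)\ge y(k)\big\}.$$ For the sample $\mathbf{x}$, for each dimension $j$ let $x_i^j=(x_i^j(t_1),\dots,x_i^j(t_N))\in\mathbb{R}^N$. The $n\times p$ matrices $\mathbf{MBD}_d(\mathbf{x})$ and $\mathbf{MEI}_d(\mathbf{x})$ have entries $\mathbf{MBD}_d(\mathbf{x})_{ij}=MBD_{\{x_1^j,\dots,x_n^j\}}(x_i^j)$ and $\mathbf{MEI}_d(\mathbf{x})_{ij}=MEI_{\{x_1^j,\dots,x_n^j\}}(x_i^j)$ (depths computed within each dimension $j$ over the $N$ time points). The depths $MBD_{\{u_1,\dots,u_n\}}$ and $MEI_{\{v_1,\dots,v_n\}}$ in the claim are then computed on the rows of these matrices, treated as vectors indexed by $j=1,\dots,p$. *)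

From mathcomp Require Import all_boot all_order all_algebra.
Set Implicit Arguments. Unset Strict Implicit. Unset Printing Implicit Defensive.
Import Order.TTheory GRing.Theory Num.Theory.
Local Open Scope ring_scope.

Definition MBD (R : realFieldType) (n m : nat) (y : 'I_n -> 'I_m -> R)
    (i : 'I_n) : R :=
  ('C(n, 2)%:R)^-1 *
  \sum_(a < n) \sum_(b < n | (a < b)%N)
     (#|[set k : 'I_m | (Num.min (y a k) (y b k) <= y i k)
                         && (y i k <= Num.max (y a k) (y b k))]|%:R / m%:R).

Definition MEI (R : realFieldType) (n m : nat) (y : 'I_n -> 'I_m -> R)
    (i : 'I_n) : R :=
  (n%:R)^-1 *
  \sum_(a < n) (#|[set k : 'I_m | y i k <= y a k]|%:R / m%:R).

(* Sample: x i j k = x_i^j(t_k), i < n observations, j < p dimensions,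
   k < N time points.  The n x p matrices MBD_d(x) and MEI_d(x), as the
   functions giving their rows (row i : 'I_p -> R). *)
Definition MBD_d (R : realFieldType) (n p N : nat)
    (x : 'I_n -> 'I_p -> 'I_N -> R) : 'I_n -> 'I_p -> R :=
  fun i j => MBD (fun a k => x a j k) i.

Definition MEI_d (R : realFieldType) (n p N : nat)
    (x : 'I_n -> 'I_p -> 'I_N -> R) : 'I_n -> 'I_p -> R :=
  fun i j => MEI (fun a k => x a j k) i.

Definition g_n (R : realFieldType) (n : nat) (z : R) : R :=
  2 / n%:R + z - n%:R / (2 * (n%:R - 1)) * z ^+ 2.

From mathcomp Require Import all_boot all_order all_algebra.
From mathcomp Require Import zify ring lra.
Set Implicit Arguments. Unset Strict Implicit. Unset Printing Implicit Defensive.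
Import Order.TTheory GRing.Theory Num.Theory.
Local Open Scope ring_scope.

(* Under hypothesis (a) the curves of each dimension j never cross, so in
   dimension j the sample is totally ordered by a single injective ranking
   w_j (the values at any fixed time point).  If ge_j(a) and le_j(a) count the
   sample points above and below a (both including a), then ge + le = n + 1 and
     MEI_d(x)_aj = ge_j(a) / n,    MBD_d(x)_aj = (ge_j(a) le_j(a) - 1) / C(n,2).
   From these closed forms we derive, for every i,
   1. MBD(U)(i) is the mean over j of MBD_d(x)_ij (the band condition for the
      rows of U reduces dimensionwise to the band condition for w_j);
   2. 1 - MEI(V)(i) is the mean over j of z_ij := 1 - #{a | V_ij <= V_aj}/n;
   3. V_ij = g_n(z_ij): counting the a with ge le >= ge_j(i) le_j(i) gives
      z_ij explicitly, and the identity is then field arithmetic.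
   Part (a) follows since g_n is a concave quadratic, for which the mean of
   the values is at most the value at the mean (mean^2 <= mean of squares).
   Under hypothesis (b) the rankings w_j coincide for all j, so z_ij does not
   depend on j and the inequality becomes an equality. *)

Lemma card_set_natr (R : realFieldType) (I : finType) (P : pred I) :
  (#|[set j | P j]|%:R : R) = \sum_j (P j)%:R.
Proof.
rewrite -sum1_card natr_sum big_mkcond /=; apply: eq_bigr => j _.
by rewrite inE; case: (P j).
Qed.

Lemma card_set_nat (I : finType) (P : pred I) :
  #|[set j | P j]| = (\sum_j (P j : nat))%N.
Proof.
rewrite -sum1_card big_mkcond /=; apply: eq_bigr => j _.
by rewrite inE; case: (P j).
Qed.

Lemma card_const_frac (R : realFieldType) N (b : bool) : (0 < N)%N ->
  (#|[set _ : 'I_N | b]|%:R / N%:R : R) = b%:R.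
Proof.
move=> N_gt0; case: b; last by rewrite cards0 mul0r.
by rewrite cardsT card_ord divff // pnatr_eq0 -lt0n.
Qed.

Lemma bin2_natr (R : realFieldType) n :
  ('C(n, 2)%:R : R) = n%:R * (n%:R - 1) / 2.
Proof.
have twice_bin2 : (2 * 'C(n, 2) = n * n.-1)%N.
  elim: n => [|n IH] //; rewrite binS bin1 mulnDr IH; case: n {IH} => //= n; lia.
apply: (@mulfI _ 2); first by rewrite pnatr_eq0.
rewrite -[2 * _]natrM twice_bin2 mulrC divfK ?pnatr_eq0 //.
case: n {twice_bin2} => [|n] /=; first by rewrite mul0r.
by rewrite natrM -addn1 natrD addrK.
Qed.

Lemma sum_pairs_sym (R : realFieldType) n (G : 'I_n -> 'I_n -> R) :
  \sum_(a < n) \sum_(b < n | (a < b)%N) (G a b + G b a) =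
  \sum_(a < n) \sum_(b < n) G a b - \sum_(a < n) G a a.
Proof.
under eq_bigr => a _ do rewrite big_split /=.
rewrite big_split /=.
have -> : \sum_(a < n) \sum_(b < n | (a < b)%N) G b a =
          \sum_(a < n) \sum_(b < n | (b < a)%N) G a b.
  under eq_bigr => a _ do rewrite big_mkcond /=.
  rewrite exchange_big /=; apply: eq_bigr => a _.
  by rewrite [RHS]big_mkcond.
rewrite -big_split -sumrB /=; apply: eq_bigr => a _.
apply/eqP; rewrite eq_sym subr_eq; apply/eqP.
rewrite (bigID (fun b : 'I_n => (a < b)%N)) /= -addrA; congr (_ + _).
rewrite (bigD1 a) ?ltnn //= addrC; congr (_ + _); apply: eq_bigl => b.
by rewrite -leqNgt leq_eqVlt eq_sym -val_eqE /=; case: (ltngtP a b).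
Qed.

Lemma same_sign_le0 (R : realFieldType) (u v : R) :
  0 < u * v -> (u <= 0) = (v <= 0).
Proof. by move=> uv_gt0; apply/idP/idP => ?; nra. Qed.

Lemma count_interval n lo hi : (0 < lo)%N -> (lo <= hi.+1)%N ->
  (\sum_(t < n) ((lo <= t.+1 <= hi) : nat) = minn n hi - minn n lo.-1)%N.
Proof.
move=> lo_gt0 lo_le; elim: n => [|n IH]; first by rewrite big_ord0; lia.
rewrite big_ord_recr /= IH.
by case: (leqP lo n.+1) => ?; case: (leqP n.+1 hi) => ? /=; lia.
Qed.

Lemma product_ge_interval n c s : (1 <= c <= n)%N -> (1 <= s <= n)%N ->
  (c * (n.+1 - c) <= (n.+1 - s) * s)%N =
  (minn c (n.+1 - c) <= s <= n.+1 - minn c (n.+1 - c))%N.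
Proof.
move=> /andP[c1 c2] /andP[s1 s2].
by apply/idP/idP => [h|/andP[h1 h2]]; [apply/andP; split|]; nia.
Qed.

Section Ranks.
Variables (R : realFieldType) (n : nat) (w : 'I_n -> R).
Hypothesis w_inj : injective w.

Definition rank_le a := #|[set b | w b <= w a]|.
Definition rank_ge a := #|[set b | w a <= w b]|.

Lemma rank_ge_le a : (rank_ge a + rank_le a = n.+1)%N.
Proof.
rewrite /rank_ge /rank_le -cardUI.
have -> : #|[predU [set b | w a <= w b] & [set b | w b <= w a]]| = n.
  rewrite -[RHS](card_ord n); apply: eq_card => b.
  by rewrite !inE /= le_total.
have -> : #|[predI [set b | w a <= w b] & [set b | w b <= w a]]| = 1%N.
  rewrite -(card1 a); apply: eq_card => b; rewrite !inE /=.
  apply/idP/idP => [/andP[h1 h2]|/eqP->]; last by rewrite lexx.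
  by apply/eqP/w_inj/le_anti; rewrite h1 h2.
by rewrite addn1.
Qed.

Lemma rank_le_mono a b : (rank_le a <= rank_le b)%N = (w a <= w b).
Proof.
apply/idP/idP => [|le_ab]; last first.
  by apply: subset_leq_card; apply/subsetP => c; rewrite !inE => /le_trans; apply.
apply: contraTT; rewrite -ltNge -ltnNge => lt_ba.
apply: proper_card; apply/properP; split.
  by apply/subsetP => c; rewrite !inE => /le_trans; apply; apply: ltW.
by exists a; rewrite !inE ?lexx // -ltNge.
Qed.

Lemma rank_ge_mono a b : (rank_ge a <= rank_ge b)%N = (w b <= w a).
Proof. by rewrite -rank_le_mono; have := rank_ge_le a; have := rank_ge_le b; lia. Qed.

Lemma rank_le_bounds a : (1 <= rank_le a <= n)%N.
Proof.
apply/andP; split; first by apply/card_gt0P; exists a; rewrite inE.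
by rewrite -[X in (_ <= X)%N](card_ord n) max_card.
Qed.

(* The number of pairs a < b whose band [w a, w b] contains w i is
   ge(i) le(i) - 1: choose one endpoint above and one below, the pair (i,i)
   excluded. *)
Lemma band_count i :
  \sum_(a < n) \sum_(b < n | (a < b)%N)
    ((((w a <= w i) || (w b <= w i)) && ((w i <= w a) || (w i <= w b)))%:R : R)
  = (rank_ge i * rank_le i)%:R - 1.
Proof.
pose G a b : R := ((w a <= w i) && (w i <= w b))%:R.
transitivity (\sum_(a < n) \sum_(b < n | (a < b)%N) (G a b + G b a)).
  apply: eq_bigr => a _; apply: eq_bigr => b lt_ab.
  have ne_ab : a != b by rewrite -val_eqE /= neq_ltn lt_ab.
  have not_both : ~~ (((w a <= w i) && (w i <= w b)) &&
                      ((w b <= w i) && (w i <= w a))).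
    apply/negP => /andP[/andP[h1 h2] /andP[h3 h4]].
    have e1 : w a = w i by apply: le_anti; rewrite h1 h4.
    have e2 : w b = w i by apply: le_anti; rewrite h3 h2.
    by move/negP: ne_ab; apply; apply/eqP/w_inj; rewrite e1 e2.
  rewrite /G; move: not_both.
  case: (lerP (w a) (w i)) => h1; case: (lerP (w b) (w i)) => h2;
    rewrite ?(ltW h1) ?(ltW h2) ?(lt_geF h1) ?(lt_geF h2) /= ?orbT;
    by case: (w i <= w b); case: (w i <= w a); rewrite //= ?addr0 ?add0r.
rewrite sum_pairs_sym.
have -> : \sum_(a < n) G a a = 1.
  rewrite (bigD1 i) //= big1 ?addr0 /G ?lexx // => a ne_ai.
  case: andP => // -[h1 h2]; move/negP: ne_ai; case; apply/eqP/w_inj.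
  by apply: le_anti; rewrite h1 h2.
congr (_ - _); rewrite mulnC natrM /rank_le /rank_ge !card_set_natr big_distrlr /=.
by apply: eq_bigr => a _; apply: eq_bigr => b _; rewrite /G -natrM mulnb.
Qed.

(* Since a |-> le(a) - 1 is a bijection onto 'I_n, the number of a whose
   product ge(a) le(a) is at least that of i is the length of an interval. *)
Lemma count_rank_product_ge i :
  #|[set a | (rank_ge i * rank_le i <= rank_ge a * rank_le a)%N]|
  = (n.+2 - 2 * minn (rank_le i) (rank_ge i))%N.
Proof.
have ge_of_le a : rank_ge a = (n.+1 - rank_le a)%N by have := rank_ge_le a; lia.
have shift_lt a : ((rank_le a).-1 < n)%N by have := rank_le_bounds a; lia.
pose sigma a := Ordinal (shift_lt a).
have sigma_inj : injective sigma.
  move=> a b /(congr1 val) /= e.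
  have e' : rank_le a = rank_le b.
    by have := rank_le_bounds a; have := rank_le_bounds b; lia.
  by apply: w_inj; apply: le_anti; rewrite -!rank_le_mono e' leqnn.
set c := rank_le i.
pose F (t : 'I_n) : nat := (c * (n.+1 - c) <= (n.+1 - t.+1) * t.+1)%N.
transitivity (\sum_t F t)%N.
  rewrite card_set_nat [RHS](reindex_inj sigma_inj); apply: eq_bigr => a _.
  have /andP[le_gt0 _] := rank_le_bounds a.
  by rewrite /F /= (prednK le_gt0) !ge_of_le -/c [(_ * c)%N]mulnC.
have c_bounds : (1 <= c <= n)%N by apply: rank_le_bounds.
under eq_bigr => t _ do rewrite /F (product_ge_interval c_bounds (ltn_ord t : (0 < t.+1 <= n)%N)).
rewrite count_interval ?ge_of_le -/c; lia.
Qed.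
End Ranks.

Section NonCrossing.
Variables (R : realFieldType) (n N : nat) (y : 'I_n -> 'I_N -> R).
Hypothesis N_gt0 : (0 < N)%N.
Hypothesis no_cross : forall (i h : 'I_n) (k1 k2 : 'I_N), i != h ->
  0 < (y i k1 - y h k1) * (y i k2 - y h k2).

Definition ref_rank (a : 'I_n) : R := y a (Ordinal N_gt0).

Lemma ref_rank_inj : injective ref_rank.
Proof.
move=> a b e; apply/eqP; apply: contraT => ne_ab.
have := no_cross (Ordinal N_gt0) (Ordinal N_gt0) ne_ab.
by rewrite /ref_rank in e; rewrite e subrr mul0r ltxx.
Qed.

Lemma order_at_any_time a b k : (y a k <= y b k) = (ref_rank a <= ref_rank b).
Proof.
case: (eqVneq a b) => [->|ne_ab]; first by rewrite !lexx.
by rewrite -subr_le0 -[RHS]subr_le0; apply: same_sign_le0; apply: no_cross.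
Qed.

Lemma MEI_rank a : MEI y a = (n%:R)^-1 * (rank_ge ref_rank a)%:R.
Proof.
rewrite /MEI /rank_ge card_set_natr; congr (_ * _); apply: eq_bigr => b _.
under eq_finset => k do rewrite order_at_any_time.
exact: card_const_frac.
Qed.

Lemma MBD_rank a :
  MBD y a = ('C(n, 2)%:R)^-1 *
            ((rank_ge ref_rank a * rank_le ref_rank a)%:R - 1).
Proof.
rewrite /MBD -(band_count ref_rank_inj); congr (_ * _).
apply: eq_bigr => b _; apply: eq_bigr => c _.
under eq_finset => k do rewrite ge_min le_max !order_at_any_time.
exact: card_const_frac.
Qed.
End NonCrossing.

(* The rank form of MBD, as a function of the proportion z of sample points
   with a smaller rank product, is g_n(z). *)
Lemma MBD_rank_as_g (R : realFieldType) (n ge le : nat) :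
  (2 <= n)%N -> (ge + le = n.+1)%N ->
  (('C(n, 2)%:R)^-1 * ((ge * le)%:R - 1) : R) =
  g_n n (1 - (n%:R)^-1 * (n.+2 - 2 * minn le ge)%:R).
Proof.
move=> n_ge2 ge_le; set m := minn le ge.
have prod_m : (ge * le = m * (n.+1 - m))%N.
  rewrite /m; case: (leqP le ge) => h.
    have -> : ge = (n.+1 - le)%N by lia.
    by rewrite mulnC.
  by have -> : le = (n.+1 - ge)%N by lia.
have m_le : (2 * m <= n.+2)%N by rewrite /m; lia.
have n_neq0 : (n%:R : R) != 0 by rewrite pnatr_eq0; lia.
have n1_neq0 : (n%:R - 1 : R) != 0 by rewrite subr_eq0 pnatr_eq1; lia.
rewrite prod_m natrM !natrB // ?natrM ?bin2_natr /g_n; last lia.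
rewrite -[n.+2]addn2 -[n.+1]addn1 !natrD.
by field; rewrite n_neq0 n1_neq0.
Qed.

Lemma sqr_mean_le (R : realFieldType) p (z : 'I_p -> R) : (0 < p)%N ->
  ((p%:R)^-1 * \sum_j z j) ^+ 2 <= (p%:R)^-1 * \sum_j z j ^+ 2.
Proof.
move=> p_gt0; set P : R := p%:R; set mu := P^-1 * \sum_j z j.
have P_gt0 : 0 < P by rewrite ltr0n.
have var_ge0 : 0 <= \sum_j (z j - mu) ^+ 2 by apply: sumr_ge0 => j _; apply: sqr_ge0.
have var_eq : \sum_j (z j - mu) ^+ 2 = \sum_j z j ^+ 2 - P * mu ^+ 2.
  transitivity (\sum_j (z j ^+ 2 - 2 * mu * z j + mu ^+ 2)).
    by apply: eq_bigr => j _; ring.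
  rewrite big_split /= sumrB -mulr_sumr sumr_const card_ord -/P.
  have -> : \sum_j z j = P * mu by rewrite /mu mulrA divff ?mul1r // gt_eqF.
  ring.
rewrite mulrC ler_pdivlMr // mulrC; lra.
Qed.

Lemma g_n_mean_le (R : realFieldType) n p (z : 'I_p -> R) :
  (2 <= n)%N -> (0 < p)%N ->
  (p%:R)^-1 * \sum_j g_n n (z j) <= g_n n ((p%:R)^-1 * \sum_j z j).
Proof.
move=> n_ge2 p_gt0.
set P : R := p%:R; set a := 2 / (n%:R : R); set k := (n%:R : R) / (2 * (n%:R - 1)).
have k_ge0 : 0 <= k.
  by rewrite divr_ge0 ?ler0n // mulr_ge0 // subr_ge0 ler1n; lia.
have P_neq0 : P != 0 by rewrite pnatr_eq0 -lt0n.
have mean_g : P^-1 * \sum_j g_n n (z j) =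
              a + P^-1 * \sum_j z j - k * (P^-1 * \sum_j z j ^+ 2).
  rewrite /g_n sumrB big_split /= sumr_const card_ord -!mulr_sumr -/a -/k -/P.
  by field.
rewrite mean_g /g_n -/a -/k -/P.
have := ler_wpM2l k_ge0 (sqr_mean_le z p_gt0); rewrite -/P; lra.
Qed.

Section Multivariate.
Variables (R : realFieldType) (n p N : nat) (x : 'I_n -> 'I_p -> 'I_N -> R).
Hypotheses (n_ge2 : (2 <= n)%N) (N_gt0 : (0 < N)%N).
Hypothesis no_cross : forall (j : 'I_p) (i h : 'I_n) (k1 k2 : 'I_N), i != h ->
  0 < (x i j k1 - x h j k1) * (x i j k2 - x h j k2).

Definition dim_rank (j : 'I_p) : 'I_n -> R := ref_rank (fun a k => x a j k) N_gt0.

Lemma dim_rank_inj j : injective (dim_rank j).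
Proof. by apply: ref_rank_inj => i h k1 k2; apply: no_cross. Qed.

Lemma MEI_d_rank a j : MEI_d x a j = (n%:R)^-1 * (rank_ge (dim_rank j) a)%:R.
Proof. by apply: MEI_rank => i h k1 k2; apply: no_cross. Qed.

Lemma MBD_d_rank a j :
  MBD_d x a j = ('C(n, 2)%:R)^-1 *
                ((rank_ge (dim_rank j) a * rank_le (dim_rank j) a)%:R - 1).
Proof. by apply: MBD_rank => i h k1 k2; apply: no_cross. Qed.

(* Step 1: MBD of the rows of U is the row mean of V; since MEI_d is a
   decreasing function of the rank, bands of U-entries are bands of ranks. *)
Lemma MBD_MEI_d_mean i : MBD (MEI_d x) i = (p%:R)^-1 * \sum_j MBD_d x i j.
Proof.
have n_inv_gt0 : (0 : R) < (n%:R)^-1 by rewrite invr_gt0 ltr0n; lia.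
under [in RHS]eq_bigr => j _ do rewrite MBD_d_rank -(band_count (@dim_rank_inj j)).
rewrite /MBD -mulr_sumr mulrCA; congr (_ * _).
rewrite exchange_big mulr_sumr; apply: eq_bigr => a _.
rewrite exchange_big mulr_sumr; apply: eq_bigr => b _.
rewrite card_set_natr mulrC; congr (_ * _); apply: eq_bigr => j _.
rewrite ge_min le_max !MEI_d_rank !ler_pM2l // !ler_nat.
by rewrite !(rank_ge_mono (@dim_rank_inj j)) andbC.
Qed.

Definition zeta i j : R :=
  1 - (n%:R)^-1 * #|[set a | MBD_d x i j <= MBD_d x a j]|%:R.

Lemma one_sub_MEI_MBD_d i : (0 < p)%N ->
  1 - MEI (MBD_d x) i = (p%:R)^-1 * \sum_j zeta i j.
Proof.
move=> p_gt0; have P_neq0 : (p%:R : R) != 0 by rewrite pnatr_eq0 -lt0n.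
have MEI_cols : MEI (MBD_d x) i =
    (p%:R)^-1 * \sum_j ((n%:R)^-1 * #|[set a | MBD_d x i j <= MBD_d x a j]|%:R).
  rewrite /MEI -mulr_sumr mulrCA; congr (_ * _).
  under eq_bigr => a _ do rewrite card_set_natr mulrC.
  rewrite -mulr_sumr; congr (_ * _).
  under [in RHS]eq_bigr => j _ do rewrite card_set_natr.
  by rewrite exchange_big.
by rewrite MEI_cols /zeta sumrB sumr_const card_ord; field.
Qed.

Lemma MBD_d_as_g i j : MBD_d x i j = g_n n (zeta i j).
Proof.
have C_inv_gt0 : (0 : R) < ('C(n, 2)%:R)^-1 by rewrite invr_gt0 ltr0n bin_gt0.
rewrite /zeta.
under eq_finset => a do rewrite !MBD_d_rank ler_pM2l // lerD2r ler_nat.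
rewrite (count_rank_product_ge (@dim_rank_inj j)) MBD_d_rank.
exact/MBD_rank_as_g/rank_ge_le/(@dim_rank_inj j).
Qed.

(* Under hypothesis (b) all dimensions induce the same ranking, hence the
   same V-column. *)
Lemma MBD_d_dim_free :
  (forall (k : 'I_N) (i h : 'I_n) (j l : 'I_p), i != h -> j != l ->
     0 < (x i j k - x h j k) * (x i l k - x h l k)) ->
  forall a j l, MBD_d x a j = MBD_d x a l.
Proof.
move=> cross_dim a j l.
have same_order b c : (dim_rank j b <= dim_rank j c) = (dim_rank l b <= dim_rank l c).
  case: (eqVneq b c) => [->|ne_bc]; first by rewrite !lexx.
  case: (eqVneq j l) => [->//|ne_jl].
  by rewrite -subr_le0 -[RHS]subr_le0; apply: same_sign_le0; apply: cross_dim.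
have [rank_ge_eq rank_le_eq] : rank_ge (dim_rank j) a = rank_ge (dim_rank l) a /\
               rank_le (dim_rank j) a = rank_le (dim_rank l) a.
  by split; apply: eq_card => b; rewrite !inE same_order.
by rewrite !MBD_d_rank rank_ge_eq rank_le_eq.
Qed.
End Multivariate.

Theorem proposition1 (R : realFieldType) (n p N : nat)
    (x : 'I_n -> 'I_p -> 'I_N -> R) :
  (2 <= n)%N -> (1 <= p)%N -> (1 <= N)%N ->
  (forall (j : 'I_p) (i h : 'I_n) (k1 k2 : 'I_N), i != h ->
      0 < (x i j k1 - x h j k1) * (x i j k2 - x h j k2)) ->
  (forall i : 'I_n,
      MBD (MEI_d x) i <= g_n n (1 - MEI (MBD_d x) i))
  /\
  ((forall (k : 'I_N) (i h : 'I_n) (j l : 'I_p), i != h -> j != l ->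
      0 < (x i j k - x h j k) * (x i l k - x h l k)) ->
   forall i : 'I_n,
      MBD (MEI_d x) i = g_n n (1 - MEI (MBD_d x) i)).
Proof.
move=> n_ge2 p_gt0 N_gt0 no_cross.
have mean_form i : MBD (MEI_d x) i = (p%:R)^-1 * \sum_j g_n n (zeta x i j)
                   /\ 1 - MEI (MBD_d x) i = (p%:R)^-1 * \sum_j zeta x i j.
  split; last exact: one_sub_MEI_MBD_d.
  rewrite (MBD_MEI_d_mean n_ge2 N_gt0 no_cross).
  by under eq_bigr => j _ do rewrite (MBD_d_as_g n_ge2 N_gt0 no_cross).
split=> [i|cross_dim i]; have [-> ->] := mean_form i.
  exact: (g_n_mean_le _ n_ge2 p_gt0).
pose j0 : 'I_p := Ordinal p_gt0.
have zeta_j0 j : zeta x i j = zeta x i j0.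
  rewrite /zeta; congr (1 - _ * _%:R); apply: eq_card => a.
  by rewrite !inE !(MBD_d_dim_free N_gt0 no_cross cross_dim _ j j0).
have P_neq0 : (p%:R : R) != 0 by rewrite pnatr_eq0 -lt0n.
have const_sum (F : R -> R) : \sum_j F (zeta x i j) = p%:R * F (zeta x i j0).
  rewrite (eq_bigr (fun=> F (zeta x i j0))) => [|j _]; last by rewrite zeta_j0.
  by rewrite sumr_const card_ord mulr_natl.
by rewrite (const_sum (g_n n)) (const_sum id) !mulKf.
Qed.
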